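(* Assume $q>2$. For every integer $d\ge1$, $$\operatorname{BG}_{q^d-2}=-\sum_{d\ge i>j\ge0}\frac{b_i(\theta^{q^d})}{l_i\,l_j}.$$
   Context: $A=\mathbb{F}_q[\theta]$, $A^+(k)$ the monic polynomials of degree $k$. For an integer $n\ge0$, $\operatorname{BG}_n=\sum_{k\ge0}\sum_{a\in A^+(k)}a^{n}\in A$ (the inner sums vanish for all sufficiently large $k$, so this is a finite sum). $l_0=1$, $l_i=(\theta-\theta^{q^i})l_{i-1}$ for $i\ge1$; $b_0(Y)=1$, $b_i(Y)=\prod_{k=0}^{i-1}(Y-\theta^{q^k})$ for $i\ge1$, evaluated at $Y=\theta^{q^d}$. *)

From HB Require Import structures.
From mathcomp Require Import all_boot all_order all_algebra.
Set Implicit Arguments. Unset Strict Implicit. Unset Printing Implicit Defensive.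
Import GRing.Theory.
Local Open Scope ring_scope.

(* A = F[theta] is {poly F}, theta = 'X, F a finite field with q = #|F| elements. *)

(* The monic polynomial of degree k with lower coefficients c. Every monic
   polynomial of degree k arises exactly once as c ranges over {ffun 'I_k -> F}. *)
Definition monic_of (F : finFieldType) (k : nat) (c : {ffun 'I_k -> F}) : {poly F} :=
  'X^k + \sum_(i < k) (c i)%:P * 'X^i.

Definition Sk (F : finFieldType) (k n : nat) : {poly F} :=
  \sum_(c : {ffun 'I_k -> F}) (monic_of c) ^+ n.

(* Partial sum sum_{k=0}^{K} S_k(n); BG_n is its eventual (stable) value. *)
Definition BG_partial (F : finFieldType) (n K : nat) : {poly F} :=
  \sum_(k < K.+1) Sk F k n.

Definition carlitz_l (F : finFieldType) (i : nat) : {poly F} :=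
  \prod_(1 <= m < i.+1) ('X - 'X^(#|F| ^ m)).

Definition carlitz_b (F : finFieldType) (i d : nat) : {poly F} :=
  \prod_(k < i) ('X^(#|F| ^ d) - 'X^(#|F| ^ k)).

Notation "x %:F" := (@FracField.tofrac _ x) : ring_scope.

From HB Require Import structures.
From mathcomp Require Import all_boot all_order all_algebra.
From mathcomp Require Import zify ring.
From mathcomp Require abelian finfield.
Set Implicit Arguments. Unset Strict Implicit. Unset Printing Implicit Defensive.
Import GRing.Theory.
Local Open Scope ring_scope.

(* Write [a(Y)] for [a] with [θ] replaced by a new variable [Y].  The polynomial
   [G(Y) = ∑_a a(Y) / a^2], over the monic [a] of degree [k], has degree [k] and
   takes the value [S_k(q^m - 2)] at [Y = θ^(q^m)] since [a(θ^(q^m)) = a^(q^m)].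
   These power sums vanish for [1 <= m <= k], because [∑_(deg c < k) (X + c)^n] is
   a constant polynomial in [X] for [n < q^k].  Hence
   [G = c ∏_(m=1..k) (Y - θ^(q^m))] for a constant [c], and evaluating at [Y = θ],
   where [G(θ) = ∑_a 1/a = 1/l_k] (Carlitz, proved the same way with
   [H(Y) = ∑_(deg a <= k) a(Y)/a]), gives [c = 1/l_k^2] and
   [S_k(q^d - 2) = ∏_(m=1..k) (θ^(q^d) - θ^(q^m)) / l_k^2], which is [0] for [k >= d].
   The double sum of the statement is this finite sum rewritten with the telescoping
   identity [∑_(i <= j) b_i / l_i = ∏_(m=1..j) (θ^(q^d) - θ^(q^m)) / l_j]. *)

Lemma poly_prod_XsubC_coef (R : fieldType) (p : {poly R}) (rs : seq R) :
  uniq rs -> all (root p) rs -> (size p <= (size rs).+1)%N ->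
  p = p`_(size rs) *: \prod_(z <- rs) ('X - z%:P).
Proof.
rewrite -uniq_rootsE => urs prs szp.
have [r def_p] := uniq_roots_prod_XsubC prs urs.
have monP : \prod_(z <- rs) ('X - z%:P) \is monic := monic_prod_XsubC _ _ _.
have [r0|r_neq0] := eqVneq r 0; first by rewrite def_p r0 !mul0r coef0 scale0r.
have /size1_polyC def_r : (size r <= 1)%N.
  move: szp; rewrite def_p size_Mmonic // size_prod_XsubC addnS /=.
  by rewrite -addn1 [(size r + _)%N]addnC leq_add2l.
have P_lead : (\prod_(z <- rs) ('X - z%:P))`_(size rs) = 1.
  by move/monicP: monP; rewrite /lead_coef size_prod_XsubC.
by rewrite def_p def_r coefCM P_lead mulr1 mul_polyC.
Qed.

Lemma expf_mulV (R : fieldType) (a : R) n : (1 < n)%N -> a ^+ n * a^-1 = a ^+ n.-1.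
Proof.
case: n => [|[|n]] // _; have [->|a_neq0] := eqVneq a 0.
  by rewrite invr0 mulr0 expr0n.
by rewrite exprSr mulfK.
Qed.

Lemma sum_triangle (R : nmodType) (n : nat) (G : nat -> nat -> R) :
  \sum_(i < n.+1) \sum_(j < i) G i j = \sum_(j < n) \sum_(j.+1 <= i < n.+1) G i j.
Proof.
under eq_bigr => i _ do rewrite (big_ord_widen n _ (ltn_ord i)).
rewrite (exchange_big_dep xpredT) //=; apply: eq_bigr => j _.
by rewrite [RHS](big_nat_widenl _ 0) // big_mkord.
Qed.

Definition node_prod (R : comPzRingType) (x : nat -> R) (y : R) (n : nat) : R :=
  \prod_(1 <= m < n.+1) (y - x m).

Lemma node_prodS (R : comPzRingType) (x : nat -> R) y n :
  node_prod x y n.+1 = node_prod x y n * (y - x n.+1).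
Proof. by rewrite /node_prod big_nat_recr. Qed.

Lemma node_prod_node (R : comPzRingType) (x : nat -> R) m n :
  (0 < m <= n)%N -> node_prod x (x m) n = 0.
Proof.
move=> le_m; rewrite /node_prod (bigD1_seq m) ?iota_uniq ?mem_index_iota //=.
by rewrite subrr mul0r.
Qed.

Section NewtonSums.

Variables (R : fieldType) (x : nat -> R) (y : R).
Hypothesis x0_neq : forall m, (0 < m)%N -> x 0 != x m.

Local Notation L := (node_prod x (x 0)).
Local Notation B i := (\prod_(k < i) (y - x k)).

Lemma node_prod_x0_neq0 n : L n != 0.
Proof.
rewrite prodf_seq_neq0; apply/allP => m; rewrite mem_index_iota => /andP[m_gt0 _].
by rewrite subr_eq0 x0_neq.
Qed.

Lemma newton_sum n : \sum_(i < n.+1) B i / L i = node_prod x y n / L n.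
Proof.
elim: n => [|n IHn]; first by rewrite big_ord1 big_ord0 /node_prod !big_geq.
have B_S : B n.+1 = (y - x 0) * node_prod x y n.
  by rewrite big_ord_recl /node_prod big_add1 /= big_mkord.
have Ln_neq0 := node_prod_x0_neq0 n.
have step_neq0 : x 0 - x n.+1 != 0 by rewrite subr_eq0 x0_neq.
rewrite big_ord_recr /= IHn B_S !node_prodS.
by field; rewrite Ln_neq0 step_neq0.
Qed.

Lemma newton_triangle n : node_prod x y n = 0 ->
  \sum_(i < n.+1) \sum_(j < i) B i / (L i * L j) =
  - \sum_(j < n) node_prod x y j / L j ^+ 2.
Proof.
move=> Pn0; rewrite (sum_triangle _ (fun i j => B i / (L i * L j))) -sumrN; apply: eq_bigr => j _.
have tail : \sum_(j.+1 <= i < n.+1) B i / L i = - (node_prod x y j / L j).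
  have := newton_sum n; rewrite Pn0 mul0r -(big_mkord xpredT (fun i => B i / L i)).
  rewrite (big_cat_nat (leq0n j.+1)); last by rewrite ltnS ltnW.
  rewrite /= big_mkord newton_sum.
  by move/eqP; rewrite addrC addr_eq0 => /eqP.
under eq_bigr do rewrite invfM mulrA.
by rewrite -mulr_suml tail mulNr mulrAC expr2 invfM mulrA.
Qed.

End NewtonSums.

Section FiniteField.

Variable F : finFieldType.
Local Notation q := #|F|.

Lemma pnat_card_finField : [pchar F].-nat q.
Proof.
have [p _ pchar_p] := finfield.finPcharP F.
have := abelian.abelem_pgroup (abelian.fin_ring_pchar_abelem pchar_p).
by rewrite /pgroup.pgroup cardsT (eq_pnat _ (pcharf_eq pchar_p)).
Qed.

Lemma natr_card_finField : q%:R = 0 :> F.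
Proof.
have q_gt1 := card_finNzRing_gt1 F.
have pchar_pdiv : pdiv q \in [pchar F].
  by apply: (pnatPpi pnat_card_finField); rewrite pi_pdiv.
by apply/eqP; rewrite -(dvdn_pcharf pchar_pdiv) pdiv_dvd.
Qed.

Lemma expf_card_pow (x : F) m : x ^+ (q ^ m)%N = x.
Proof. by elim: m => [|m IHm]; rewrite ?expr1 // expnSr exprM IHm finfield.expf_card. Qed.

Lemma comp_polyXn_card (a : {poly F}) m : a \Po 'X^(q ^ m)%N = a ^+ (q ^ m)%N.
Proof.
have pnat_qm : [pchar {poly F}].-nat (q ^ m)%N.
  by rewrite (eq_pnat _ (pchar_poly F)) pnatX pnat_card_finField.
elim/poly_ind: a => [|a c IHa].
  by rewrite comp_poly0 expr0n expn_eq0 eqn0Ngt (ltnW (card_finNzRing_gt1 F)).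
rewrite exprDn_pchar // exprMn -rmorphXn /= expf_card_pow -IHa.
by rewrite comp_polyD comp_polyM comp_polyX comp_polyC.
Qed.

Definition ffun_poly k (c : {ffun 'I_k -> F}) : {poly F} :=
  \sum_(i < k) (c i)%:P * 'X^i.

Lemma monic_ofE k (c : {ffun 'I_k -> F}) : monic_of c = 'X^k + ffun_poly c.
Proof. by []. Qed.

Lemma ffun_polyD k (c1 c2 : {ffun 'I_k -> F}) :
  ffun_poly (c1 + c2) = ffun_poly c1 + ffun_poly c2.
Proof.
by rewrite -big_split; apply: eq_bigr => i _; rewrite ffunE polyCD mulrDl.
Qed.

Lemma ffun_polyZ k t (c : {ffun 'I_k -> F}) :
  ffun_poly [ffun i => t * c i] = t *: ffun_poly c.
Proof.
by rewrite scaler_sumr; apply: eq_bigr => i _; rewrite ffunE polyCM -mulrA mul_polyC.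
Qed.

Lemma coef_ffun_poly k (c : {ffun 'I_k -> F}) (i : 'I_k) : (ffun_poly c)`_i = c i.
Proof.
rewrite coef_sum (bigD1 i) //= coefCM coefXn eqxx mulr1 big1 ?addr0 // => j ji.
by rewrite coefCM coefXn eq_sym (inj_eq val_inj) (negbTE ji) mulr0.
Qed.

Lemma size_ffun_poly k (c : {ffun 'I_k -> F}) : (size (ffun_poly c) <= k)%N.
Proof.
apply: (leq_trans (size_sum _ _ _)); apply/bigmax_leqP => i _.
by rewrite mul_polyC (leq_trans (size_scale_leq _ _)) // size_polyXn.
Qed.

Lemma ffun_poly_inj k : injective (@ffun_poly k).
Proof. by move=> c1 c2 eq_c; apply/ffunP => i; rewrite -!coef_ffun_poly eq_c. Qed.

Lemma ffun_poly_eq0 k (c : {ffun 'I_k -> F}) : (ffun_poly c == 0) = (c == 0).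
Proof.
have ffun_poly0 : ffun_poly (0 : {ffun 'I_k -> F}) = 0.
  by rewrite /ffun_poly big1 // => i _; rewrite ffunE mul0r.
by rewrite -ffun_poly0 (inj_eq (@ffun_poly_inj k)).
Qed.

Lemma size_monic_of k (c : {ffun 'I_k -> F}) : size (monic_of c) = k.+1.
Proof.
rewrite monic_ofE size_polyDl size_polyXn //.
exact: leq_ltn_trans (size_ffun_poly c) _.
Qed.

Lemma monic_of_neq0 k (c : {ffun 'I_k -> F}) : monic_of c != 0.
Proof. by rewrite -size_poly_eq0 size_monic_of. Qed.

Definition ffun_snoc k (c : {ffun 'I_k -> F}) (t : F) : {ffun 'I_k.+1 -> F} :=
  [ffun i => if unlift ord_max i is Some j then c j else t].

Lemma ffun_poly_snoc k (c : {ffun 'I_k -> F}) t :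
  ffun_poly (ffun_snoc c t) = ffun_poly c + t *: 'X^k.
Proof.
rewrite /ffun_poly big_ord_recr /= ffunE unlift_none mul_polyC; congr (_ + _).
apply: eq_bigr => i _; have -> : widen_ord (leqnSn k) i = lift ord_max i.
  by apply: val_inj; rewrite [RHS]lift_max.
by rewrite ffunE liftK.
Qed.

Lemma ffun_snoc_bij k : bijective (fun p : F * {ffun 'I_k -> F} => ffun_snoc p.2 p.1).
Proof.
exists (fun c : {ffun 'I_k.+1 -> F} => (c ord_max, [ffun j : 'I_k => c (lift ord_max j)])).
  move=> [t c] /=; rewrite ffunE unlift_none; congr (_, _).
  by apply/ffunP => j; rewrite !ffunE liftK.
move=> c; apply/ffunP => i; rewrite ffunE.
by case: unliftP => [j ->|->] /=; rewrite ?ffunE.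
Qed.

Lemma sum_ffun_polyS (V : nmodType) (g : {poly F} -> V) k :
  \sum_(c : {ffun 'I_k.+1 -> F}) g (ffun_poly c) =
  \sum_(t : F) \sum_(c : {ffun 'I_k -> F}) g (ffun_poly c + t *: 'X^k).
Proof.
rewrite pair_big /= (reindex _ (onW_bij _ (ffun_snoc_bij k))) /=.
by apply: eq_bigr => -[t c] _; rewrite ffun_poly_snoc.
Qed.

Lemma natr_card_pow_sub1 (R : pzRingType) m :
  q%:R = 0 :> R -> (0 < m)%N -> (q ^ m - 1)%:R = -1 :> R.
Proof.
move=> q0 m_gt0; have q_gt0 := ltnW (card_finNzRing_gt1 F).
by rewrite natrB ?expn_gt0 ?q_gt0 // natrX q0 expr0n eqn0Ngt m_gt0 sub0r.
Qed.

Lemma card_pow_gt1 m : (0 < m)%N -> (1 < q ^ m)%N.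
Proof.
have q_gt1 := card_finNzRing_gt1 F.
by move=> m_gt0; rewrite -(exp1n m) ltn_exp2r -?lt0n.
Qed.

Lemma card_pow_sub1_lt m k : (0 < m <= k)%N -> (q ^ m - 1 < q ^ k)%N.
Proof.
case/andP=> m_gt0 le_mk; have q_gt1 := card_finNzRing_gt1 F.
have : (q ^ m <= q ^ k)%N by rewrite leq_exp2l // ltnW.
have : (0 < q ^ m)%N by rewrite expn_gt0 ltnW.
lia.
Qed.

Definition pow_sum k n (x : {poly F}) : {poly F} :=
  \sum_(c : {ffun 'I_k -> F}) (x + ffun_poly c) ^+ n.

Definition pow_sum_poly k n : {poly {poly F}} :=
  \sum_(c : {ffun 'I_k -> F}) ('X + (ffun_poly c)%:P) ^+ n.

Lemma horner_pow_sum_poly k n x : (pow_sum_poly k n).[x] = pow_sum k n x.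
Proof. by rewrite horner_sum; apply: eq_bigr => c _; rewrite !hornerE. Qed.

Lemma pow_sum_shift k n x (c0 : {ffun 'I_k -> F}) :
  pow_sum k n (x + ffun_poly c0) = pow_sum k n x.
Proof.
rewrite /pow_sum [RHS](reindex_inj (addrI c0)) /=.
by apply: eq_bigr => c _; rewrite ffun_polyD addrA.
Qed.

(* By [pow_sum_shift], [pow_sum_poly k n - pow_sum k n 0] vanishes at the [q ^ k]
   points [ffun_poly c], more than its degree [n]. *)
Lemma pow_sum_polyE k n : (n < q ^ k)%N -> pow_sum_poly k n = (pow_sum k n 0)%:P.
Proof.
move=> n_lt; apply/eqP; rewrite -subr_eq0; apply/negPn/negP => nzQ.
set rs := [seq ffun_poly c | c <- enum {ffun 'I_k -> F}].
have rs_uniq : uniq rs by rewrite map_inj_uniq ?enum_uniq //; apply: ffun_poly_inj.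
have rs_roots : all (root (pow_sum_poly k n - (pow_sum k n 0)%:P)) rs.
  apply/allP => _ /mapP[c _ ->]; rewrite /root hornerD hornerN hornerC.
  by rewrite horner_pow_sum_poly -[ffun_poly c]add0r pow_sum_shift subrr.
have := max_poly_roots nzQ rs_roots rs_uniq.
rewrite size_map -cardE card_ffun card_ord ltnNge (leq_trans _ n_lt) //.
apply: (leq_trans (size_polyD _ _)); rewrite size_polyN size_polyC geq_max.
apply/andP; split; last by case: (_ != 0).
apply: (leq_trans (size_sum _ _ _)); apply/bigmax_leqP => c _.
by rewrite -[ffun_poly c]opprK polyCN size_exp_XsubC.
Qed.

Lemma pow_sum_const k n x y : (n < q ^ k)%N -> pow_sum k n x = pow_sum k n y.
Proof. by move=> n_lt; rewrite -!horner_pow_sum_poly pow_sum_polyE // !hornerC. Qed.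

(* Differentiate the constant [pow_sum_poly k (q ^ m - 1)]; the exponent
   [q ^ m - 1] becomes the scalar [-1]. *)
Lemma pow_sum_card_pow_sub2 k m x : (0 < m <= k)%N -> pow_sum k (q ^ m - 2) x = 0.
Proof.
move=> le_mk; have /pow_sum_polyE Q_const := card_pow_sub1_lt le_mk.
have deriv_Q : (pow_sum_poly k (q ^ m - 1))^`() = - pow_sum_poly k (q ^ m - 2).
  rewrite linear_sum -sumrN; apply: eq_bigr => c _ /=.
  rewrite deriv_exp derivD derivX derivC addr0 mul1r -mulr_natr.
  rewrite natr_card_pow_sub1 ?(andP le_mk).1 ?mulrN1 -?subn1 -?subnDA //.
  by rewrite -!polyC_natr natr_card_finField.
have := congr1 (horner^~ x) deriv_Q.
rewrite Q_const derivC horner0 hornerN horner_pow_sum_poly => /esym/eqP.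
by rewrite oppr_eq0 => /eqP.
Qed.

Lemma pow_sum_card_pow_sub1 k m x :
  (0 < m <= k)%N -> pow_sum k.+1 (q ^ m - 1) x = 0.
Proof.
move=> /card_pow_sub1_lt n_lt.
rewrite /pow_sum (sum_ffun_polyS (fun a => (x + a) ^+ (q ^ m - 1))).
under eq_bigr => t _.
  rewrite (eq_bigr (fun c => (x + t *: 'X^k + ffun_poly c) ^+ (q ^ m - 1))); last first.
    by move=> c _; rewrite addrAC addrA.
  rewrite -/(pow_sum k _ _) (pow_sum_const _ 0 n_lt).
  over.
by rewrite sumr_const -mulr_natr -polyC_natr natr_card_finField mulr0.
Qed.

Local Notation K := {fraction {poly F}}.

Lemma natr_card_frac : q%:R = 0 :> K.
Proof. by rewrite -(rmorph_nat (@tofrac _)) -polyC_natr natr_card_finField rmorph0. Qed.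

(* [liftY a] is [a(Y)]. *)
Definition liftY (a : {poly F}) : {poly K} := map_poly (@tofrac _ \o polyC) a.

Definition node m : K := ('X^(q ^ m) : {poly F})%:F.

Lemma liftY_node a m : (liftY a).[node m] = (a ^+ (q ^ m))%:F.
Proof.
rewrite -comp_polyXn_card /comp_poly -horner_map /=; congr (_.[_]).
by rewrite -map_poly_comp.
Qed.

Lemma node_inj : injective node.
Proof.
move=> m1 m2 /eqP; rewrite tofrac_eq => /eqP /(congr1 (fun p : {poly F} => size p)).
by rewrite !size_polyXn => -[]; apply: expnI; apply: card_finNzRing_gt1.
Qed.

Lemma interp_nodes k (G : {poly K}) :
  (size G <= k.+1)%N -> (forall m, (0 < m <= k)%N -> G.[node m] = 0) ->
  forall z, G.[z] = G`_k * node_prod node z k.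
Proof.
move=> szG G_nodes z.
set rs := [seq node m | m <- iota 1 k].
have size_rs : size rs = k by rewrite size_map size_iota.
have rs_uniq : uniq rs by rewrite map_inj_uniq ?iota_uniq //; apply: node_inj.
have rs_roots : all (root G) rs.
  apply/allP => y /mapP[m]; rewrite mem_iota add1n ltnS => le_mk ->.
  exact/eqP/G_nodes.
rewrite {1}(poly_prod_XsubC_coef rs_uniq rs_roots) size_rs // hornerZ.
rewrite horner_prod big_map /node_prod /index_iota subSS subn0; congr (_ * _).
by apply: eq_bigr => m _; rewrite !hornerE.
Qed.

Definition wsum_poly (I : finType) (a : I -> {poly F}) (w : I -> K) : {poly K} :=
  \sum_i liftY (a i) * (w i)%:P.

Lemma size_wsum_poly (I : finType) (a : I -> {poly F}) w n :
  (forall i, size (a i) <= n)%N -> (size (wsum_poly a w) <= n)%N.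
Proof.
move=> size_a; apply: (leq_trans (size_sum _ _ _)); apply/bigmax_leqP => i _.
rewrite mulrC mul_polyC (leq_trans (size_scale_leq _ _)) //.
by rewrite size_map_poly size_a.
Qed.

Lemma horner_wsum_poly_node (I : finType) (a : I -> {poly F}) w m :
  (wsum_poly a w).[node m] = \sum_i (a i ^+ (q ^ m))%:F * w i.
Proof. by rewrite horner_sum; apply: eq_bigr => i _; rewrite hornerM hornerC liftY_node. Qed.

Lemma coef_wsum_poly (I : finType) (a : I -> {poly F}) w j :
  (wsum_poly a w)`_j = \sum_i ((a i)`_j)%:P%:F * w i.
Proof. by rewrite coef_sum; apply: eq_bigr => i _; rewrite coefMC coef_map. Qed.

Definition recip_sum k : K := \sum_(c : {ffun 'I_k -> F}) ((monic_of c)%:F)^-1.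

(* [Hpoly k] is [H(Y)]; the term [a = 0] contributes nothing as [0^-1 = 0]. *)
Definition Hpoly k : {poly K} :=
  wsum_poly (@ffun_poly k.+1) (fun c => ((ffun_poly c)%:F)^-1).

Lemma Hpoly_node k m : (0 < m <= k)%N -> (Hpoly k).[node m] = 0.
Proof.
move=> le_mk; have /andP[m_gt0 _] := le_mk.
have := congr1 (@tofrac _) (pow_sum_card_pow_sub1 0 le_mk).
rewrite rmorph0 rmorph_sum horner_wsum_poly_node => /(etrans _); apply.
apply: eq_bigr => c _.
by rewrite add0r !rmorphXn expf_mulV ?card_pow_gt1 // subn1.
Qed.

Lemma Hpoly_node0 k : (Hpoly k).[node 0] = -1.
Proof.
rewrite horner_wsum_poly_node expn0 (bigD1 (0 : {ffun 'I_k.+1 -> F})) //=.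
have -> : ffun_poly (0 : {ffun 'I_k.+1 -> F}) = 0 by apply/eqP; rewrite ffun_poly_eq0.
rewrite rmorph0 mul0r add0r.
rewrite (eq_bigr (fun _ => 1)) => [|c c_neq0]; last first.
  by rewrite expr1 divff // tofrac_eq0 ffun_poly_eq0.
rewrite sumr_const cardC1 card_ffun card_ord -subn1.
by rewrite natr_card_pow_sub1 ?natr_card_frac.
Qed.

Lemma coef_Hpoly k : (Hpoly k)`_k = - recip_sum k.
Proof.
rewrite coef_wsum_poly (sum_ffun_polyS (fun a => (a`_k)%:P%:F * (a%:F)^-1)) /=.
rewrite (bigD1 0) //= big1 ?add0r => [|c _]; last first.
  by rewrite scale0r addr0 nth_default ?size_ffun_poly // rmorph0 mul0r.
rewrite (eq_bigr (fun _ => recip_sum k)) => [|t t_neq0].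
  rewrite sumr_const cardC1 -mulr_natr -subn1 natrB ?natr_card_frac ?sub0r ?mulrN1 //.
  exact: ltnW (card_finNzRing_gt1 F).
have scale_inj : injective (fun c : {ffun 'I_k -> F} => [ffun i => t * c i]).
  by move=> c1 c2 /ffunP eq_c; apply/ffunP => i; have := eq_c i; rewrite !ffunE => /mulfI; apply.
rewrite /recip_sum (reindex_inj scale_inj); apply: eq_bigr => c _ /=.
have -> : ffun_poly [ffun i => t * c i] + t *: 'X^k = t%:P * monic_of c.
  by rewrite ffun_polyZ monic_ofE mul_polyC scalerDr addrC.
have lead_c : (monic_of c)`_k = 1.
  by rewrite monic_ofE coefD coefXn eqxx nth_default ?size_ffun_poly ?addr0.
by rewrite coefCM lead_c mulr1 rmorphM /= invfM mulVKf // tofrac_eq0 polyC_eq0.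
Qed.

Lemma node0_neq m : (0 < m)%N -> node 0 != node m.
Proof. by move=> m_gt0; rewrite (inj_eq node_inj) eq_sym -lt0n. Qed.

Lemma recip_sumE k : recip_sum k = (node_prod node (node 0) k)^-1.
Proof.
have size_H : (size (Hpoly k) <= k.+1)%N.
  by apply: size_wsum_poly => c; apply: size_ffun_poly.
have := interp_nodes size_H (@Hpoly_node k) (node 0).
rewrite Hpoly_node0 coef_Hpoly mulNr => /oppr_inj one_eq.
by rewrite -[LHS](mulfK (node_prod_x0_neq0 node0_neq k)) -one_eq mul1r.
Qed.

Definition Gpoly k : {poly K} :=
  wsum_poly (@monic_of F k) (fun c => ((monic_of c)%:F ^+ 2)^-1).

Lemma Gpoly_node k m : (0 < m)%N -> (Gpoly k).[node m] = (Sk F k (q ^ m - 2))%:F.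
Proof.
move=> m_gt0; rewrite horner_wsum_poly_node rmorph_sum; apply: eq_bigr => c _.
have unit_c : (monic_of c)%:F \is a GRing.unit by rewrite unitfE tofrac_eq0 monic_of_neq0.
by rewrite !rmorphXn /= exprB ?card_pow_gt1.
Qed.

Lemma Gpoly_node0 k : (Gpoly k).[node 0] = recip_sum k.
Proof.
rewrite horner_wsum_poly_node; apply: eq_bigr => c _.
have nz_c : (monic_of c)%:F != 0 by rewrite tofrac_eq0 monic_of_neq0.
by rewrite expn0 expr1 expr2 invfM mulVKf.
Qed.

Lemma Sk_card_pow_sub2 k d : (0 < d)%N ->
  (Sk F k (q ^ d - 2))%:F = node_prod node (node d) k / node_prod node (node 0) k ^+ 2.
Proof.
move=> d_gt0.
have size_G : (size (Gpoly k) <= k.+1)%N.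
  by apply: size_wsum_poly => c; rewrite size_monic_of.
have G_nodes m : (0 < m <= k)%N -> (Gpoly k).[node m] = 0.
  move=> le_mk; rewrite Gpoly_node ?(andP le_mk).1 //.
  by rewrite [Sk _ _ _](pow_sum_card_pow_sub2 _ le_mk) rmorph0.
have L_neq0 := node_prod_x0_neq0 node0_neq k.
have := interp_nodes size_G G_nodes (node 0).
rewrite Gpoly_node0 recip_sumE => /esym /(canRL (mulfK L_neq0)) lead_G.
by rewrite -Gpoly_node // (interp_nodes size_G G_nodes) lead_G mulrC expr2 invfM.
Qed.

Lemma BG_partial_card_pow_sub2 d n : (0 < d <= n)%N ->
  (BG_partial F (q ^ d - 2) n)%:F =
  \sum_(j < d) node_prod node (node d) j / node_prod node (node 0) j ^+ 2.
Proof.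
case/andP=> d_gt0 le_dn; rewrite rmorph_sum.
pose f j := node_prod node (node d) j / node_prod node (node 0) j ^+ 2.
rewrite (big_ord_widen n.+1 f (leq_trans le_dn _)) // [RHS]big_mkcond.
apply: eq_bigr => k _; rewrite -[LHS]/((Sk F k _)%:F) Sk_card_pow_sub2 //.
by case: ltnP => // le_dk; rewrite node_prod_node ?d_gt0 // mul0r.
Qed.

Lemma tofrac_carlitz_l i : (carlitz_l F i)%:F = node_prod node (node 0) i.
Proof. by rewrite rmorph_prod; apply: eq_bigr => m _; rewrite rmorphB /node expn0. Qed.

Lemma tofrac_carlitz_b i d : (carlitz_b F i d)%:F = \prod_(k < i) (node d - node k).
Proof. by rewrite rmorph_prod; apply: eq_bigr => k _; rewrite rmorphB. Qed.

End FiniteField.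

Theorem theorem5p1 (F : finFieldType) (d : nat) :
  (2 < #|F|)%N -> (1 <= d)%N ->
  exists N : nat, forall K : nat, (N <= K)%N ->
    (BG_partial F (#|F| ^ d - 2) K)%:F =
    - \sum_(i < d.+1) \sum_(j < i)
        (carlitz_b F i d)%:F / ((carlitz_l F i)%:F * (carlitz_l F j)%:F)
      :> {fraction {poly F}}.
Proof.
move=> _ d_gt0; exists d => n le_dn; rewrite BG_partial_card_pow_sub2 ?d_gt0 //.
under [in RHS]eq_bigr do under eq_bigr do rewrite tofrac_carlitz_b !tofrac_carlitz_l.
rewrite (newton_triangle (@node0_neq F)) ?opprK //.
by rewrite node_prod_node // d_gt0 leqnn.
Qed.
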